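(* Let $G$ be a simple, biconnected, planar graph of maximum degree at most $k$, and let $\mathcal{T}$ be its SPQR-tree, rooted at a Q-node. Let $\mu$ be a node of $\mathcal{T}$ that is not the root, let $\mu'$ be its parent, and let $\{s,t\}$ be the poles of $\mu$. Then for every $v\in\{s,t\}$, the degree of $v$ in the pertinent graph of $\mu$ is at most $k-2$ if $\mu'$ is a P-node or an R-node, and at most $k-1$ otherwise (i.e., if $\mu'$ is an S-node or a Q-node).
   Context: The SPQR-tree (with Q-nodes) of a biconnected graph $G$ is the standard decomposition tree of $G$ into its triconnected components. Each node $\mu$ has a skeleton graph $\mathrm{skel}(\mu)$: for a Q-node it consists of two parallel edges, one of which (the real edge) is an edge of $G$; for an S-node it is a simple cycle of length at least three; for a P-node it is a bundle of at least three parallel edges between two vertices; for an R-node it is a simple triconnected graph. Non-real skeleton edges are virtual edges; each virtual edge of $\mathrm{skel}(\mu)$ corresponds to a tree neighbour $\mu''$ of $\mu$ and to a twin virtual edge in $\mathrm{skel}(\mu'')$. The leaves are exactly the Q-nodes, one per edge of $G$; no two S-nodes and no two P-nodes are adjacent. When the tree is rooted at a Q-node, every non-root node $\mu$ has exactly one virtual edge (the reference edge) whose twin lies in the skeleton of its parent; the endpoints $s,t$ of the reference edge are the poles of $\mu$. The pertinent graph of $\mu$ is the subgraph of $G$ formed by the real edges of the Q-nodes in the subtree rooted at $\mu$ (equivalently, obtained by recursively replacing the non-reference virtual edges of $\mathrm{skel}(\mu)$ by the skeletons of the corresponding children). *)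

From HB Require Import structures.
From mathcomp Require Import all_boot.
From mathcomp Require Import fingroup perm.
Set Implicit Arguments. Unset Strict Implicit. Unset Printing Implicit Defensive.

Definition simple_graph (V : finType) (g : rel V) : Prop :=
  symmetric g /\ irreflexive g.

Definition connected_on (T : finType) (e : rel T) (A : {set T}) : Prop :=
  forall x y, x \in A -> y \in A ->
    connect [rel a b | [&& a \in A, b \in A & e a b]] x y.

Definition biconnected (V : finType) (g : rel V) : Prop :=
  [/\ 3 <= #|V|, connected_on g setT & forall x, connected_on g (setT :\ x)].

Definition max_degree_le (V : finType) (g : rel V) (k : nat) : Prop :=
  forall x, #|[set y | g x y]| <= k.

Definition Gedges (V : finType) (g : rel V) : {set {set V}} :=
  [set [set p.1; p.2] | p in [set p : V * V | g p.1 p.2]].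

(* Planarity (combinatorial embeddings / rotation systems):            *)
(* a connected graph is planar iff it has a rotation system whose     *)
(* faces satisfy Euler's formula  V - E + F = 2.                       *)

Definition dart (V : finType) (g : rel V) := {d : V * V | g d.1 d.2}.

Definition planar (V : finType) (g : rel V) : Prop :=
  exists (rho : {perm dart g}) (rev : dart g -> dart g),
  [/\ forall d, val (rev d) = ((val d).2, (val d).1),
      forall d, (val (rho d)).1 = (val d).1,
      forall d d', (val d).1 = (val d').1 -> fconnect rho d d' &
      (#|V| + fcard (fun d => rho (rev d)) predT).*2 = #|{: dart g}| + 4].

(*  N      : nodes of the tree, t : tree adjacency                     *)
(*  skelV mu : vertex set of skel(mu) (skeleton vertices are vertices  *)
(*             of G)                                                   *)
(*  qend mu  : endpoints of the real edge of a Q-node                  *)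
(*  vend mu nu : endpoints of the virtual edge of skel(mu) associated  *)
(*             to the tree neighbour nu (its twin is vend nu mu)       *)
(* The skeleton edges of mu are indexed by option N: None is the real  *)
(* edge (present iff mu is a Q-node), Some nu the virtual edge for the *)
(* tree neighbour nu.                                                  *)

Inductive spqr_kind := Qnode | Snode | Pnode | Rnode.

Definition isQ k := if k is Qnode then true else false.
Definition isS k := if k is Snode then true else false.
Definition isP k := if k is Pnode then true else false.

Section SPQR.
Variables (V N : finType) (g : rel V) (t : rel N) (kind : N -> spqr_kind)
  (qend : N -> {set V}) (vend : N -> N -> {set V}) (skelV : N -> {set V}).

Definition is_tree : Prop :=
  [/\ symmetric t, irreflexive t, connected_on t setT &
      #|[set p : N * N | t p.1 p.2]| = (#|N|).-1.*2].

Definition sk_edges (mu : N) : {set option N} :=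
  [set o | if o is Some nu then t mu nu else isQ (kind mu)].

Definition sk_end (mu : N) (o : option N) : {set V} :=
  if o is Some nu then vend mu nu else qend mu.

Definition sk_deg (mu : N) (x : V) : nat :=
  #|[set o in sk_edges mu | x \in sk_end mu o]|.

Definition sk_adj (mu : N) : rel V :=
  fun x y => (x != y) && [exists o in sk_edges mu, sk_end mu o == [set x; y]].

Definition skel_wf (mu : N) : Prop :=
  [/\ forall o, o \in sk_edges mu ->
        #|sk_end mu o| = 2 /\ sk_end mu o \subset skelV mu &
      forall x, x \in skelV mu -> 0 < sk_deg mu x].

Definition skel_kind_ok (mu : N) : Prop :=
  match kind mu with
  | Qnode => (* two parallel edges: the real edge and one virtual edge *)
      [/\ #|sk_edges mu| = 2, qend mu \in Gedges g, skelV mu = qend mu &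
          forall nu, t mu nu -> vend mu nu = qend mu]
  | Snode => (* simple cycle of length >= 3: connected, 2-regular *)
      [/\ 3 <= #|skelV mu|, forall x, x \in skelV mu -> sk_deg mu x = 2 &
          connected_on (sk_adj mu) (skelV mu)]
  | Pnode => (* bundle of >= 3 parallel edges between two vertices *)
      #|skelV mu| = 2 /\ 3 <= #|sk_edges mu|
  | Rnode => (* simple triconnected graph *)
      [/\ forall o o', o \in sk_edges mu -> o' \in sk_edges mu ->
            sk_end mu o = sk_end mu o' -> o = o',
          4 <= #|skelV mu| &
          forall x y, connected_on (sk_adj mu) (skelV mu :\ x :\ y)]
  end.

Definition is_SPQR_tree : Prop :=
  [/\ is_tree /\ (forall mu, skel_wf mu /\ skel_kind_ok mu),
      (forall mu nu, t mu nu -> vend mu nu = vend nu mu) /\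
      (forall mu, isQ (kind mu) = (#|[set nu | t mu nu]| == 1)),
      (forall mu nu, t mu nu ->
         ~~ (isS (kind mu) && isS (kind nu)) /\ ~~ (isP (kind mu) && isP (kind nu))),
      (forall E, E \in Gedges g -> exists! mu, isQ (kind mu) /\ qend mu = E) &
      (* G is obtained by gluing the skeletons along twin virtual edges:
         every vertex of G occurs in the skeletons of a (nonempty) subtree,
         and adjacent skeletons share exactly the endpoints of their
         twin virtual edges *)
      [/\ forall x, exists mu, x \in skelV mu,
          forall x, connected_on t [set mu | x \in skelV mu] &
          forall mu nu, t mu nu -> skelV mu :&: skelV nu = vend mu nu]].

(* rooted at r: nodes of the subtree rooted at mu (mu <> r): those
   separated from r by mu *)
Definition subtree (r mu : N) : {set N} :=
  [set nu | ~~ connect [rel a b | [&& t a b, a != mu & b != mu]] r nu].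

(* edges of the pertinent graph of mu: real edges of the Q-nodes of the
   subtree rooted at mu *)
Definition pert_edges (r mu : N) : {set {set V}} :=
  [set qend nu | nu in subtree r mu & isQ (kind nu)].

Definition pert_deg (r mu : N) (x : V) : nat :=
  #|[set y | [set x; y] \in pert_edges r mu]|.

End SPQR.

From mathcomp Require Import all_boot.
From mathcomp Require Import fingroup perm.
From mathcomp Require Import zify.
Set Implicit Arguments. Unset Strict Implicit. Unset Printing Implicit Defensive.

(* Let X consist of mu and of the nodes whose skeleton contains the pole v and
   which are reachable from mu' without passing through mu.  A virtual edge at v
   in the skeleton of a node of X leads to another node of X, so in the forest
   that the tree induces on X every non-Q-node other than mu has degree at least
   its skeleton degree at v, which is 2 for an S-node and at least 3 for a P- or
   R-node, while mu has degree at least 1.  As this forest has fewer than |X|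
   edges, X contains at least one Q-node, and at least two when mu' is a P- or
   R-node.  Their real edges are distinct edges of G at v that do not belong to
   the pertinent graph of mu. *)

Lemma set2_injr (T : finType) (v y y' : T) :
  y' != v -> [set v; y] = [set v; y'] -> y = y'.
Proof.
move=> y'v E; have : y' \in [set v; y'] by rewrite !inE eqxx orbT.
by rewrite -E !inE (negbTE y'v) => /eqP.
Qed.

Lemma Gedges_at (V : finType) (g : rel V) (E : {set V}) (v : V) :
  E \in Gedges g -> v \in E -> exists y, E = [set v; y].
Proof.
case/imsetP=> p _ -> {E}; rewrite !inE => /orP[]/eqP->; first by exists p.2.
by exists p.1; rewrite setUC.
Qed.

Lemma Gedges_set2 (V : finType) (g : rel V) (v y : V) :
  symmetric g -> irreflexive g -> [set v; y] \in Gedges g -> g v y.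
Proof.
move=> gsym girr /imsetP[p]; rewrite inE => gp E.
have p21 : p.2 != p.1 by apply: contraTneq gp => ->; rewrite girr.
have : v \in [set p.1; p.2] by rewrite -E set21.
rewrite !inE => /orP[]/eqP vE; move: E; rewrite vE.
  by move/(set2_injr p21) ->.
by rewrite [in RHS]setUC gsym => /set2_injr -> //; rewrite eq_sym.
Qed.

Lemma connect_exit (T : finType) (e : rel T) (B : {set T}) x y :
  x \in B -> y \notin B -> connect e x y ->
  exists a b, [/\ a \in B, b \notin B & e a b].
Proof.
move=> xB yB /connectP[p ep yE]; rewrite {y}yE in yB.
elim: p x xB ep yB => [|z p IH] x xB /=; first by rewrite xB.
case/andP=> exz ezp; case: (boolP (z \in B)) => [zB|zB _]; first exact: IH.
by exists x, z.
Qed.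

Lemma sum_nat_single (T : finType) (A : {set T}) (a : T) (F : T -> nat) :
  a \in A -> (forall x, x != a -> F x = 0) -> \sum_(x in A) F x = F a.
Proof. by move=> aA F0; rewrite (bigD1 a) //= big1 ?addn0 // => x /andP[_ /F0]. Qed.

Lemma sum_nat_mem (T : finType) (A B : {set T}) :
  B \subset A -> \sum_(x in A) (x \in B) = #|B|.
Proof.
move=> BA; rewrite -sum1_card [LHS]big_mkcond [RHS]big_mkcond /=.
apply: eq_bigr => x _; case: (boolP (x \in B)) => [xB|_]; last by case: (x \in A).
by rewrite (subsetP BA _ xB).
Qed.

Section TreeArcs.
Variables (T : finType) (e : rel T).

Definition arcs (A : {set T}) : nat :=
  #|[set p : T * T | [&& p.1 \in A, p.2 \in A & e p.1 p.2]]|.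

Lemma arcs_sum A : arcs A = \sum_(x in A) #|[set y in A | e x y]|.
Proof.
rewrite /arcs -sum1_card.
under [RHS]eq_bigr => x _ do rewrite -sum1_card.
rewrite pair_big_dep /=; apply: eq_bigl => -[x y]; by rewrite !inE.
Qed.

Lemma arcs_mono (A B : {set T}) : A \subset B -> arcs A <= arcs B.
Proof.
move=> AB; apply/subset_leq_card/subsetP => p; rewrite !inE.
by case/and3P=> pA1 pA2 ->; rewrite !(subsetP AB).
Qed.

Hypothesis e_sym : symmetric e.

Lemma arcs_setU1 (B : {set T}) a x :
  a \in B -> x \notin B -> e a x -> arcs B + 2 <= arcs (x |: B).
Proof.
move=> aB xB eax; rewrite /arcs; set S := [set p | _]; set S' := [set p | _].
set P := [set (a, x); (x, a)].
have ax : (a, x) != (x, a) by apply: contraNneq xB => -[<-].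
have SP : S :&: P = set0.
  apply/setP => -[p1 p2]; rewrite !inE /=; apply/negbTE.
  apply: contraNN xB => /andP[/and3P[p1B p2B _]].
  by case/orP=> /eqP[E1 E2]; [rewrite -E2 | rewrite -E1].
have SPsub : S :|: P \subset S'.
  apply/subsetP => p; rewrite !inE.
  case/or3P => [/and3P[-> -> ->]|/eqP->|/eqP->] /=; rewrite ?orbT //.
  - by rewrite eqxx aB eax orbT.
  - by rewrite eqxx aB e_sym eax orbT.
by have := subset_leq_card SPsub; rewrite cardsU SP cards0 cards2 ax subn0.
Qed.

Hypothesis e_conn : forall x y, connect e x y.

Lemma arcs_setT_ge (B : {set T}) :
  B != set0 -> arcs B + (#|T| - #|B|).*2 <= arcs setT.
Proof.
move=> B0; move Hn: (#|T| - #|B|) => n; elim: n B B0 Hn => [|n IH] B B0 Hn.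
  by rewrite addn0 arcs_mono ?subsetT.
have [y _ yB] : exists2 y, y \in setT & y \notin B.
  apply/subsetPn; apply: contra_eqN Hn => /subset_leq_card.
  by rewrite cardsT -subn_eq0 => /eqP->.
have [b bB] := set0Pn _ B0.
have [a [x [aB xB eax]]] := connect_exit bB yB (e_conn b y).
have xB0 : x |: B != set0 by apply/set0Pn; exists x; rewrite setU11.
have := IH _ xB0; rewrite cardsU1 xB => /(_ ltac:(lia)).
have := arcs_setU1 aB xB eax; rewrite doubleS; lia.
Qed.
End TreeArcs.

Lemma tree_arcs_le (T : finType) (t : rel T) (X : {set T}) :
  is_tree t -> X != set0 -> arcs t X <= (#|X|).-1.*2.
Proof.
case=> tsym _ tconn tcard X0.
have t_conn x y : connect t x y.
  have := tconn x y (in_setT x) (in_setT y).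
  by rewrite (@eq_connect _ _ t) // => a b; rewrite /= !in_setT.
have arcsT : arcs t setT = (#|T|).-1.*2.
  by rewrite -tcard; apply: eq_card => p; rewrite !inE.
have := arcs_setT_ge tsym t_conn X0; rewrite arcsT.
have := max_card (mem X); rewrite -card_gt0 in X0; lia.
Qed.

Lemma tree_degree_deficit (T : finType) (t : rel T) (X : {set T}) (b w : T -> nat) :
  is_tree t -> X != set0 ->
  (forall x, x \in X -> 2 + b x <= #|[set y in X | t x y]| + w x) ->
  2 + \sum_(x in X) b x <= \sum_(x in X) w x.
Proof.
move=> tree X0 Xdeg.
have : \sum_(x in X) (2 + b x) <= \sum_(x in X) (#|[set y in X | t x y]| + w x).
  exact: leq_sum.
rewrite !big_split /= sum_nat_const -arcs_sum.
have := tree_arcs_le tree X0; rewrite -card_gt0 in X0; lia.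
Qed.

Lemma card_le2_sub_set2 (T : finType) (A : {set T}) (d : T) : #|A| <= 2 ->
  exists a b, A \subset [set a; b] /\ [set a; b] \subset d |: A.
Proof.
move=> A2; have [->|[a aA]] := set_0Vmem A.
  by exists d, d; rewrite sub0set setUid subsetUl.
have [A1|[b bA]] := set_0Vmem (A :\ a).
  exists a, a; rewrite setUid sub1set !inE aA orbT; split=> //.
  apply/subsetP => z zA; have : z \notin A :\ a by rewrite A1 inE.
  by rewrite !inE zA andbT negbK.
exists a, b; split; last first.
  by case/setD1P: bA => _ bA; rewrite subUset !sub1set !inE aA bA !orbT.
apply/subsetP => z zA; rewrite !inE; apply/negPn/negP; rewrite negb_or => /andP[za zb].
move: A2; rewrite (cardsD1 a) aA (cardsD1 b) bA (cardsD1 z (A :\ a :\ b)).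
by rewrite !inE za zb zA.
Qed.

Lemma triconnected_nbr_card (T : finType) (e : rel T) (S : {set T}) (v : T) :
  v \in S -> 4 <= #|S| -> ~~ e v v ->
  (forall a b, connected_on e (S :\ a :\ b)) -> 3 <= #|[set y | e v y]|.
Proof.
move=> vS S4 evv S3conn; rewrite leqNgt ltnS; apply/negP => nbr2.
have [d dS dv] : exists2 d, d \in S & d != v.
  have /card_gt0P[d] : 0 < #|S :\ v| by move: S4; rewrite (cardsD1 v) vS; lia.
  by case/setD1P => dv dS; exists d.
have [a [b [nbr_ab ab_sub]]] := card_le2_sub_set2 d nbr2.
have [va vb] : v != a /\ v != b.
  apply/andP; rewrite -negb_or -in_set2; apply: contraNN dv => /(subsetP ab_sub).
  by rewrite !inE (negbTE evv) orbF eq_sym.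
have [z zS] : exists z, z \in S :\: [set v; a; b].
  apply/set0Pn; rewrite -card_gt0 cardsD.
  have := subset_leq_card (subsetIr S [set v; a; b]).
  have : #|[set v; a; b]| <= 3 by rewrite !cardsU !cards1; lia.
  lia.
move: zS; rewrite !inE !negb_or => /andP[/andP[/andP[zv za] zb] {}zS].
have vz := S3conn a b v z; rewrite !inE va vb vS za zb zS in vz.
have zv' : z \notin [set v] by rewrite inE.
have [_ [y [/set1P-> _ /and3P[_]]]] := connect_exit (set11 v) zv' (vz isT isT).
rewrite !inE => /and3P[yb ya _] evy.
by have := subsetP nbr_ab y; rewrite !inE evy (negbTE ya) (negbTE yb) => /(_ isT).
Qed.

Definition isPR k := if k is (Pnode | Rnode) then true else false.

Section SkeletonDegree.
Variables (V N : finType) (g : rel V) (t : rel N) (kind : N -> spqr_kind)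
  (qend : N -> {set V}) (vend : N -> N -> {set V}) (skelV : N -> {set V}).

Lemma card_sk_adj_le (mu : N) (v : V) :
  #|[set y | sk_adj t kind qend vend mu v y]| <= sk_deg t kind qend vend mu v.
Proof.
rewrite -(card_in_imset (f := fun y => [set v; y])); last first.
  move=> y1 y2; rewrite !inE => /andP[v1 _] /andP[v2 _].
  by move/set2_injr->; rewrite // eq_sym.
apply: leq_trans (leq_imset_card (sk_end qend vend mu) _).
apply/subset_leq_card/subsetP => E /imsetP[y]; rewrite inE => /andP[_].
case/exists_inP => o o_mu /eqP o_vy ->{E}; apply/imsetP; exists o => //.
by rewrite inE o_mu o_vy set21.
Qed.

Lemma sk_deg_ge (mu : N) (v : V) :
  skel_wf t kind qend vend skelV mu -> skel_kind_ok g t kind qend vend skelV mu ->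
  ~~ isQ (kind mu) -> v \in skelV mu ->
  2 + isPR (kind mu) <= sk_deg t kind qend vend mu v.
Proof.
case=> ends _; rewrite /skel_kind_ok; case: (kind mu) => //= kind_ok _ v_mu.
- by case: kind_ok => _ -> .
- case: kind_ok => card2 edges3; apply: leq_trans edges3 _.
  apply/subset_leq_card/subsetP => o o_mu; rewrite inE o_mu /=.
  have [end2 end_sub] := ends o o_mu.
  by move: end_sub; rewrite subEproper properEcard end2 card2 ltnn andbF orbF => /eqP->.
- case: kind_ok => _ four conn3; apply: leq_trans (card_sk_adj_le mu v).
  by apply: triconnected_nbr_card v_mu four _ conn3; rewrite /sk_adj eqxx.
Qed.

End SkeletonDegree.

Section SPQRTree.
Variables (V N : finType) (g : rel V) (t : rel N) (kind : N -> spqr_kind)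
  (qend : N -> {set V}) (vend : N -> N -> {set V}) (skelV : N -> {set V}).
Hypothesis spqr : is_SPQR_tree g t kind qend vend skelV.

Lemma spqr_tree : is_tree t.
Proof. by case: spqr => -[]. Qed.

Lemma spqr_skel x :
  skel_wf t kind qend vend skelV x /\ skel_kind_ok g t kind qend vend skelV x.
Proof. by case: spqr => -[_ skel] *; apply: skel. Qed.

Lemma vend_skelV x nu (v : V) : t x nu -> v \in vend x nu -> v \in skelV nu.
Proof. by case: spqr => _ _ _ _ [_ _ glue] /glue <- /setIP[]. Qed.

Lemma Qnode_skel x : isQ (kind x) ->
  [/\ qend x \in Gedges g, skelV x = qend x & forall nu, t x nu -> vend x nu = qend x].
Proof. by have [_] := spqr_skel x; rewrite /skel_kind_ok; case: (kind x) => // -[]. Qed.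

Lemma Qnode_nbr x : isQ (kind x) -> exists nu, t x nu.
Proof.
case: spqr => _ [_ leaf] _ _ _; rewrite leaf => /eqP nbr1.
have /card_gt0P[nu] : 0 < #|[set nu | t x nu]| by rewrite nbr1.
by rewrite inE; exists nu.
Qed.

Lemma Qnode_inj : {in [pred x | isQ (kind x)] &, injective qend}.
Proof.
move=> x1 x2 x1Q x2Q E; have [edge _ _] := Qnode_skel x1Q.
case: spqr => _ _ _ /(_ _ edge)[x0 [_ qend_uniq]] _.
by rewrite -(qend_uniq x1) ?(qend_uniq x2).
Qed.

Section OuterPoleNodes.
Hypotheses (g_sym : symmetric g) (g_irr : irreflexive g).
Variables (r mu mu' : N) (v : V).
Hypotheses (t_mu_mu' : t mu mu') (mu'_outside : mu' \notin subtree t r mu)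
  (v_pole : v \in vend mu mu').

Definition avoid_mu := [rel a b | [&& t a b, a != mu & b != mu]].

Definition outer := [set x | connect avoid_mu mu' x & v \in skelV x].

Definition outerQ := [set x in outer | isQ (kind x)].

Definition outer_deg x := #|[set y in mu |: outer | t x y]|.

Lemma mu'_neq_mu : mu' != mu.
Proof. by apply: contraTneq t_mu_mu' => ->; case: spqr_tree => _ ->. Qed.

Lemma outer_neq_mu x : x \in outer -> x != mu.
Proof.
have closed_mu : closed avoid_mu (predC1 mu).
  by move=> a b /and3P[_ a_mu b_mu]; rewrite !inE a_mu b_mu.
rewrite inE => /andP[/(closed_connect closed_mu) + _].
by rewrite !inE mu'_neq_mu => <-.
Qed.

Lemma outer_skelV x : x \in outer -> v \in skelV x.
Proof. by rewrite inE => /andP[]. Qed.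

Lemma mu'_outer : mu' \in outer.
Proof. by rewrite inE connect0 (vend_skelV t_mu_mu' v_pole). Qed.

Lemma outer_nbr x nu :
  x \in outer -> t x nu -> v \in vend x nu -> nu \in mu |: outer.
Proof.
move=> x_out t_x_nu v_x_nu; have x_mu := outer_neq_mu x_out.
rewrite !inE (vend_skelV t_x_nu v_x_nu) andbT; case: (nu =P mu) => //= /eqP nu_mu.
move: x_out; rewrite inE => /andP[mu'_x _].
by apply: connect_trans mu'_x (connect1 _); rewrite /= t_x_nu x_mu nu_mu.
Qed.

Lemma outer_deg_mu : 0 < outer_deg mu.
Proof.
apply/card_gt0P; exists mu'; rewrite inE t_mu_mu' andbT.
by apply/setU1P; right; exact: mu'_outer.
Qed.

Lemma outerQ_deg x : x \in outerQ -> 0 < outer_deg x.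
Proof.
rewrite inE => /andP[x_out xQ]; have [_ skelE vendE] := Qnode_skel xQ.
have [nu t_x_nu] := Qnode_nbr xQ.
apply/card_gt0P; exists nu; rewrite inE t_x_nu andbT.
by apply: (outer_nbr x_out t_x_nu); rewrite vendE // -skelE outer_skelV.
Qed.

Lemma sk_deg_le_outer_deg x : x \in outer -> ~~ isQ (kind x) ->
  sk_deg t kind qend vend x v <= outer_deg x.
Proof.
move=> x_out xQ; apply: leq_trans (leq_imset_card Some _).
apply/subset_leq_card/subsetP => -[nu|]; rewrite !inE ?(negbTE xQ) //=.
case/andP=> t_x_nu v_x_nu; apply/imsetP; exists nu => //.
by rewrite inE t_x_nu (outer_nbr x_out t_x_nu v_x_nu).
Qed.

Lemma outer_deg_ge x : x \in mu |: outer ->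
  2 + ((x == mu') && isPR (kind mu')) <= outer_deg x + ((x == mu) + (x \in outerQ)).
Proof.
rewrite addnA; case/setU1P => [->|x_out].
  have mu_outQ : mu \notin outerQ.
    by apply/negP; rewrite inE => /andP[/outer_neq_mu]; rewrite eqxx.
  rewrite eq_sym (negbTE mu'_neq_mu) eqxx (negbTE mu_outQ) /=.
  by rewrite !addn0 addn1 ltnS outer_deg_mu.
rewrite (negbTE (outer_neq_mu x_out)) addn0.
have PR_le : (x == mu') && isPR (kind mu') <= isPR (kind x) by case: eqP => // ->.
case: (boolP (isQ (kind x))) => xQ.
  have x_outQ : x \in outerQ by rewrite inE x_out xQ.
  move: PR_le; rewrite x_outQ; case: (kind x) xQ => // _; rewrite leqn0 => /eqP->.
  by rewrite addn1 ltnS outerQ_deg.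
have [wf kind_ok] := spqr_skel x.
rewrite inE (negbTE xQ) andbF addn0; apply: leq_trans (sk_deg_le_outer_deg x_out xQ).
by apply: leq_trans (sk_deg_ge wf kind_ok xQ (outer_skelV x_out)); rewrite leq_add2l.
Qed.

Lemma outerQ_card : 1 + isPR (kind mu') <= #|outerQ|.
Proof.
have X0 : mu |: outer != set0 by apply/set0Pn; exists mu; exact: setU11.
have := tree_degree_deficit spqr_tree X0 outer_deg_ge.
have outerQ_sub : outerQ \subset mu |: outer.
  by apply/subsetP => x; rewrite inE => /andP[x_out _]; apply/setU1P; right.
rewrite big_split /= (sum_nat_mem outerQ_sub).
rewrite (sum_nat_single (a := mu')) ?setU1r ?mu'_outer //; last by move=> x /negbTE->.
rewrite (sum_nat_single (a := mu)) ?setU11 //; last by move=> x /negbTE->.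
by rewrite !eqxx /= addSn add1n ltnS.
Qed.

Lemma outerQ_not_pertinent x :
  x \in outerQ -> qend x \notin pert_edges t kind qend r mu.
Proof.
rewrite inE => /andP[x_out xQ]; apply/imsetP => -[y]; rewrite inE => /andP[y_sub yQ].
move/(Qnode_inj xQ yQ) => xy; move: y_sub; rewrite -xy inE => /negP; apply.
move: mu'_outside x_out; rewrite !inE negbK => r_mu' /andP[mu'_x _].
exact: connect_trans r_mu' mu'_x.
Qed.

Lemma pert_deg_outerQ :
  pert_deg t kind qend r mu v + #|outerQ| <= #|[set y | g v y]|.
Proof.
set P := [set y | [set v; y] \in pert_edges t kind qend r mu].
set Y := [set y | [set v; y] \in qend @: outerQ].
have outerQ_Y : #|outerQ| <= #|Y|.
  rewrite -(card_in_imset (f := qend)); last first.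
    by move=> x1 x2; rewrite !inE => /andP[_ x1Q] /andP[_ x2Q]; exact: Qnode_inj.
  apply: leq_trans (leq_imset_card (fun y => [set v; y]) Y).
  apply/subset_leq_card/subsetP => E /imsetP[x x_outQ ->{E}].
  move: (x_outQ); rewrite inE => /andP[x_out xQ]; have [edge skelE _] := Qnode_skel xQ.
  have v_x : v \in qend x by rewrite -skelE outer_skelV.
  have [y Ey] := Gedges_at edge v_x.
  by apply/imsetP; exists y => //; rewrite inE -Ey imset_f.
have PY0 : P :&: Y = set0.
  apply/setP => y; rewrite !inE; apply/negbTE/negP.
  case/andP=> vy_pert /imsetP[x x_outQ E].
  by have := outerQ_not_pertinent x_outQ; rewrite -E vy_pert.
have PY_nbr : P :|: Y \subset [set y | g v y].
  apply/subsetP => y; rewrite !inE => vy_edge; apply: Gedges_set2 => //.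
  by case/orP: vy_edge => /imsetP[x]; rewrite !inE => /andP[_ /Qnode_skel[edge _ _]] ->.
have := subset_leq_card PY_nbr; rewrite cardsU PY0 cards0 subn0.
by change (pert_deg t kind qend r mu v) with #|P|; lia.
Qed.

Lemma pert_deg_pole :
  pert_deg t kind qend r mu v + (1 + isPR (kind mu')) <= #|[set y | g v y]|.
Proof. by apply: leq_trans pert_deg_outerQ; rewrite leq_add2l outerQ_card. Qed.

End OuterPoleNodes.

End SPQRTree.

Theorem mainTheorem1 (V : finType) (g : rel V) (k : nat)
  (N : finType) (t : rel N) (kind : N -> spqr_kind) (qend : N -> {set V})
  (vend : N -> N -> {set V}) (skelV : N -> {set V})
  (r mu mu' : N) (v : V) :
  simple_graph g -> biconnected g -> planar g -> max_degree_le g k ->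
  is_SPQR_tree g t kind qend vend skelV ->
  kind r = Qnode -> mu != r ->
  t mu mu' -> mu' \notin subtree t r mu ->
  v \in vend mu mu' ->
  ((kind mu' = Pnode \/ kind mu' = Rnode) ->
      pert_deg t kind qend r mu v + 2 <= k) /\
  ((kind mu' = Snode \/ kind mu' = Qnode) ->
      pert_deg t kind qend r mu v + 1 <= k).
Proof.
move=> [g_sym g_irr] _ _ deg_k spqr _ _ t_mu_mu' mu'_outside v_pole.
have := pert_deg_pole spqr g_sym g_irr t_mu_mu' mu'_outside v_pole.
move/leq_trans/(_ (deg_k v)) => bound.
by split=> -[] kind_mu'; rewrite kind_mu' in bound.
Qed.
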